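(* Let $m,n,t$ be positive integers, let $p\in\mathbb{R}[x_1,\dots,x_n]$ be a form of degree $t$, let $T_p\in\mathbb{R}^{n\times\cdots\times n}$ be its associated symmetric $t$-tensor, and let $A_1,\dots,A_n\in L(\mathbb{R}^m)$ be pairwise commuting contractions. Then $$\|p\|_{\mathrm{cb}}\ge\Big\|\sum_{i_1,\dots,i_t=1}^n(T_p)_{i_1,\dots,i_t}A_{i_1}\cdots A_{i_t}\Big\|.$$
   Context: A form is a homogeneous polynomial; for $p(x)=\sum_{|\alpha|=t}c_\alpha x^\alpha$, $(T_p)_{i_1,\dots,i_t}=c_{e_{i_1}+\dots+e_{i_t}}/\tau(i_1,\dots,i_t)$ where $\tau$ is the number of distinct permutations of $(i_1,\dots,i_t)$. For a $t$-tensor $T$, $\|T\|_{\mathrm{cb}}=\sup\|\sum_{i_1,\dots,i_t}T_{i_1,\dots,i_t}U_1(i_1)\cdots U_t(i_t)\|$ over all $k$ and $k\times k$ unitaries $U_j(i)$; equivalently (by the Russo–Dye theorem) over all $k\times k$ contractions. With $(T\circ\sigma)_{i_1,\dots,i_t}=T_{i_{\sigma(1)},\dots,i_{\sigma(t)}}$, $\|p\|_{\mathrm{cb}}=\inf\{\sum_{\sigma\in S_t}\|T^\sigma\|_{\mathrm{cb}}:T_p=\sum_{\sigma\in S_t}T^\sigma\circ\sigma\}$. A contraction is a linear map of operator norm at most $1$; $\|\cdot\|$ is the operator norm. *)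

From HB Require Import structures.
From mathcomp Require Import all_boot all_order all_algebra all_fingroup.
From mathcomp Require Import classical_sets reals.
From mathcomp Require Import complex.
From mathcomp Require Import mpoly.

Set Implicit Arguments.
Unset Strict Implicit.
Unset Printing Implicit Defensive.

Import Order.TTheory GRing.Theory Num.Theory.
Local Open Scope ring_scope.
Local Open Scope classical_set_scope.

Section Defs.
Variable R : realType.

Definition normv (m : nat) (v : 'cV[R]_m) : R :=
  Num.sqrt (\sum_(l < m) (v l 0) ^+ 2).

Definition opnorm (m : nat) (A : 'M[R]_m) : R :=
  sup [set r | exists v : 'cV[R]_m, normv v <= 1 /\ r = normv (A *m v)].

Definition normvC (k : nat) (v : 'cV[R[i]]_k) : R :=
  Num.sqrt (\sum_(l < k) (complex.Re (v l 0) ^+ 2 + complex.Im (v l 0) ^+ 2)).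

Definition opnormC (k : nat) (M : 'M[R[i]]_k) : R :=
  sup [set r | exists v : 'cV[R[i]]_k, normvC v <= 1 /\ r = normvC (M *m v)].

Definition unitary (k : nat) (U : 'M[R[i]]_k) : Prop :=
  (map_mx (@conjc R) U)^T *m U = 1%:M.

Definition tensor (n t : nat) := {ffun 'I_t -> 'I_n} -> R.

Definition cbnormT (n t : nat) (T : tensor n t) : R :=
  sup [set r | exists (k : nat) (U : 'I_t -> 'I_n -> 'M[R[i]]_k),
         (0 < k)%N /\ (forall j l, unitary (U j l)) /\
         r = opnormC (\sum_(idx : {ffun 'I_t -> 'I_n})
                        (Complex (T idx) 0) *: \big[mulmx/1%:M]_(j < t) U j (idx j))].

Definition tcomp (n t : nat) (T : tensor n t) (s : {perm 'I_t}) : tensor n t :=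
  fun idx => T [ffun j => idx (s j)].

Definition mono_of (n t : nat) (idx : {ffun 'I_t -> 'I_n}) : 'X_{1..n} :=
  \big[@mnm_add n/@mnm0 n]_(j < t) mnm1 (idx j).

Definition tau (n t : nat) (idx : {ffun 'I_t -> 'I_n}) : nat :=
  #|[set [ffun j => idx (s j)] | s : {perm 'I_t}]|.

Definition Tp (n t : nat) (p : {mpoly R[n]}) : tensor n t :=
  fun idx => p@_(mono_of idx) / (tau idx)%:R.

Definition cbnorm (n t : nat) (p : {mpoly R[n]}) : R :=
  inf [set r | exists S : {perm 'I_t} -> tensor n t,
         (forall idx, @Tp n t p idx = \sum_(s : {perm 'I_t}) tcomp (S s) s idx) /\
         r = \sum_(s : {perm 'I_t}) cbnormT (S s)].

End Defs.
Arguments Tp {R n} t p idx.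
Arguments cbnorm {R n} t p.

From HB Require Import structures.
From mathcomp Require Import all_boot all_order all_algebra all_fingroup.
From mathcomp Require Import classical_sets reals.
From mathcomp Require Import complex.
From mathcomp Require Import mpoly.
From mathcomp Require Import ring.
Import Order.TTheory GRing.Theory Num.Theory.
Local Open Scope ring_scope.

Set Implicit Arguments.
Unset Strict Implicit.
Unset Printing Implicit Defensive.

(* For a single real tensor [T] the norm of [sum_idx T_idx A_idx] is at most
   [||T||_cb].  Indeed, a real contraction [A] is a corner of the block-diagonal
   matrix [diag(A^T, A) = J H], where [J] swaps the two halves and
   [H = [[0, A], [A^T, 0]]] is a Hermitian contraction.  By the spectral theorem
   [H] is the mean of the two unitaries [H +- i sqrt(1 - H^2)], so [diag(A_l^T, A_l)]
   is a mean of two unitaries [V_l^+-]; expanding the products shows that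
   [diag(sum T_idx A_idx^T, sum T_idx A_idx)] is the mean of the [2^t] matrices
   [sum T_idx V_(idx_1)^(e_1) ... V_(idx_t)^(e_t)], each of norm at most [||T||_cb].
   Since the [A_l] commute, every decomposition [T_p = sum_s T^s o s] gives
   [sum (T_p)_idx A_idx = sum_s sum T^s_idx A_idx], and the triangle inequality
   bounds the norm by [sum_s ||T^s||_cb]. *)

Lemma cauchy_schwarz_sum (R : realDomainType) (I : finType) (f g : I -> R) :
  (\sum_i f i * g i) ^+ 2 <= (\sum_i f i ^+ 2) * (\sum_i g i ^+ 2).
Proof.
set a := \sum_i f i ^+ 2; set b := \sum_i g i ^+ 2; set c := \sum_i f i * g i.
have a_ge0 : 0 <= a by apply: sumr_ge0 => i _; exact: sqr_ge0.
have b_ge0 : 0 <= b by apply: sumr_ge0 => i _; exact: sqr_ge0.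
have [b0|b_neq0] := eqVneq b 0.
  have g0 i : g i = 0.
    apply/eqP; rewrite -sqrf_eq0; apply/eqP.
    by apply: (psumr_eq0P _ b0) => // j _; exact: sqr_ge0.
  have -> : c = 0 by rewrite /c big1 // => i _; rewrite g0 mulr0.
  by rewrite expr0n mulr_ge0.
have b_gt0 : 0 < b by rewrite lt_def b_neq0.
have expand : \sum_i (b * f i - c * g i) ^+ 2 = b * (a * b - c ^+ 2).
  have -> : b * (a * b - c ^+ 2) =
      \sum_i (b ^+ 2 * f i ^+ 2 - (b * c *+ 2) * (f i * g i) + c ^+ 2 * g i ^+ 2).
    by rewrite big_split sumrB /= -!mulr_sumr -/a -/b -/c; ring.
  by apply: eq_bigr => i _; ring.
have : 0 <= b * (a * b - c ^+ 2).
  by rewrite -expand; apply: sumr_ge0 => i _; exact: sqr_ge0.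
by rewrite pmulr_rge0 // subr_ge0 mulrC.
Qed.

Lemma minkowski_sum (R : rcfType) (I : finType) (f g : I -> R) :
  Num.sqrt (\sum_i (f i + g i) ^+ 2) <=
  Num.sqrt (\sum_i f i ^+ 2) + Num.sqrt (\sum_i g i ^+ 2).
Proof.
set a := \sum_i f i ^+ 2; set b := \sum_i g i ^+ 2; set c := \sum_i f i * g i.
have a_ge0 : 0 <= a by apply: sumr_ge0 => i _; exact: sqr_ge0.
have b_ge0 : 0 <= b by apply: sumr_ge0 => i _; exact: sqr_ge0.
have -> : \sum_i (f i + g i) ^+ 2 = a + c *+ 2 + b.
  by rewrite /a /b /c -sumrMnl -!big_split /=; apply: eq_bigr => i _; ring.
have c_le : c <= Num.sqrt a * Num.sqrt b.
  rewrite (le_trans (ler_norm c)) // -sqrtr_sqr -sqrtrM // ler_sqrt ?mulr_ge0 //.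
  exact: cauchy_schwarz_sum.
rewrite -(ger0_norm (addr_ge0 (sqrtr_ge0 a) (sqrtr_ge0 b))) -sqrtr_sqr.
rewrite ler_sqrt ?sqr_ge0 // sqrrD !sqr_sqrtr // lerD2r lerD2l.
by rewrite lerMn2r c_le.
Qed.

Lemma big_mulmxE (K : pzRingType) k (I : Type) (r : seq I) (F : I -> 'M[K]_k) :
  \big[mulmx/1%:M]_(i <- r) F i = \prod_(i <- r) F i.
Proof. by elim: r => [|x r IH]; rewrite ?big_nil ?big_cons ?IH. Qed.

Lemma prodr_perm_comm (K : pzRingType) (I : eqType) (r1 r2 : seq I) (F : I -> K) :
  (forall i j, GRing.comm (F i) (F j)) -> perm_eq r1 r2 ->
  \prod_(i <- r1) F i = \prod_(i <- r2) F i.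
Proof.
move=> hF; elim: r1 r2 => [|x r1 IH] r2 hp.
  by move/perm_size: hp => /esym /size0nil ->.
have x_r2 : x \in r2 by rewrite -(perm_mem hp) mem_head.
case/splitPr: x_r2 hp => p1 p2 hp.
have hp' : perm_eq r1 (p1 ++ p2).
  by rewrite -(perm_cons x) (perm_trans hp) // -cat1s perm_catCA.
rewrite big_cons (IH _ hp') !big_cat big_cons /= !mulrA.
by rewrite [F x * _]commr_prod // => j _; exact: hF.
Qed.

Lemma big_mulmx_perm (K : pzRingType) k t (s : {perm 'I_t}) (F : 'I_t -> 'M[K]_k) :
  (forall i j, F i *m F j = F j *m F i) ->
  \big[mulmx/1%:M]_(j < t) F (s j) = \big[mulmx/1%:M]_(j < t) F j.
Proof.
move=> hF; rewrite !big_mulmxE -(big_map s xpredT F).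
apply: prodr_perm_comm => //; apply: uniq_perm.
- by rewrite map_inj_uniq ?index_enum_uniq //; exact: perm_inj.
- exact: index_enum_uniq.
move=> x; rewrite mem_index_enum; apply/mapP; exists ((s^-1)%g x).
  by rewrite mem_index_enum.
by rewrite permKV.
Qed.

Lemma big_mulmx_block_diag (K : pzRingType) k1 k2 t
    (P : 'I_t -> 'M[K]_k1) (Q : 'I_t -> 'M[K]_k2) :
  \big[mulmx/1%:M]_(j < t) block_mx (P j) 0 0 (Q j) =
  block_mx (\big[mulmx/1%:M]_(j < t) P j) 0 0 (\big[mulmx/1%:M]_(j < t) Q j).
Proof.
elim/big_rec3: _ => [|j y1 y2 y3 _ ->]; first by rewrite -scalar_mx_block.
by rewrite mulmx_block !mulmx0 !mul0mx !addr0 !add0r.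
Qed.

Lemma big_mulmx_scale (K : comPzRingType) k (I : Type) (r : seq I) (a : K)
    (F : I -> 'M[K]_k) :
  \big[mulmx/1%:M]_(i <- r) (a *: F i) = a ^+ size r *: \big[mulmx/1%:M]_(i <- r) F i.
Proof.
elim: r => [|x r IH]; first by rewrite !big_nil scale1r.
by rewrite !big_cons IH -scalemxAl -scalemxAr scalerA -exprS.
Qed.

Lemma big_mulmx_sum_scale (K : comPzRingType) k t (I : finType) (a : K)
    (F : 'I_t -> I -> 'M[K]_k) :
  \big[mulmx/1%:M]_(j < t) (\sum_i a *: F j i) =
  a ^+ t *: \sum_(e : {ffun 'I_t -> I}) \big[mulmx/1%:M]_(j < t) F j (e j).
Proof.
rewrite !big_mulmxE bigA_distr_bigA scaler_sumr; apply: eq_bigr => e _.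
rewrite -!big_mulmxE big_mulmx_scale.
by rewrite /index_enum -enumT size_enum_ord.
Qed.

Definition tensor_eval (K : pzRingType) n t k (c : {ffun 'I_t -> 'I_n} -> K)
    (U : 'I_t -> 'I_n -> 'M[K]_k) : 'M[K]_k :=
  \sum_idx c idx *: \big[mulmx/1%:M]_(j < t) U j (idx j).

Section TensorEval.
Variables (K : pzRingType) (n t : nat).
Implicit Types (c : {ffun 'I_t -> 'I_n} -> K).

Lemma eq_tensor_eval k c1 c2 (U : 'I_t -> 'I_n -> 'M[K]_k) :
  c1 =1 c2 -> tensor_eval c1 U = tensor_eval c2 U.
Proof. by move=> c12; apply: eq_bigr => idx _; rewrite c12. Qed.

Lemma tensor_eval_sum k (I : finType) (c : I -> {ffun 'I_t -> 'I_n} -> K)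
    (U : 'I_t -> 'I_n -> 'M[K]_k) :
  tensor_eval (fun idx => \sum_i c i idx) U = \sum_i tensor_eval (c i) U.
Proof.
rewrite /tensor_eval exchange_big /=; apply: eq_bigr => idx _.
exact: scaler_suml.
Qed.

Lemma tensor_eval_perm k c (s : {perm 'I_t}) (A : 'I_n -> 'M[K]_k) :
  (forall l l', A l *m A l' = A l' *m A l) ->
  tensor_eval (fun idx => c [ffun j => idx (s j)]) (fun _ => A) =
  tensor_eval c (fun _ => A).
Proof.
move=> hA; rewrite /tensor_eval.
rewrite (reindex (fun idx : {ffun 'I_t -> 'I_n} => [ffun j => idx ((s^-1)%g j)])) /=.
  apply: eq_bigr => idx _; congr (_ *: _).
    by congr c; apply/ffunP => j; rewrite !ffunE permK.
  rewrite -(big_mulmx_perm (s^-1)%g (F := fun j => A (idx j))) //.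
  by apply: eq_bigr => j _; rewrite ffunE.
exists (fun idx : {ffun 'I_t -> 'I_n} => [ffun j => idx (s j)]) => idx _;
  by apply/ffunP => j; rewrite !ffunE ?permK ?permKV.
Qed.

Lemma tensor_eval_block_diag k1 k2 c
    (P : 'I_t -> 'I_n -> 'M[K]_k1) (Q : 'I_t -> 'I_n -> 'M[K]_k2) :
  tensor_eval c (fun j l => block_mx (P j l) 0 0 (Q j l)) =
  block_mx (tensor_eval c P) 0 0 (tensor_eval c Q).
Proof.
rewrite /tensor_eval; elim/big_rec3: _ => [|idx y1 y2 y3 _ ->].
  by rewrite block_mx0.
by rewrite big_mulmx_block_diag scale_block_mx !scaler0 add_block_mx !addr0.
Qed.

Lemma map_tensor_eval (K' : pzRingType) (f : {rmorphism K -> K'}) k c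
    (U : 'I_t -> 'I_n -> 'M[K]_k) :
  map_mx f (tensor_eval c U) =
  tensor_eval (fun idx => f (c idx)) (fun j l => map_mx f (U j l)).
Proof.
rewrite /tensor_eval (big_morph _ (map_mxD f (m := k) (n := k)) (map_mx0 f k k)).
apply: eq_bigr => idx _.
by rewrite map_mxZ (big_morph _ (map_mxM f (m := k) (n := k) (p := k)) (map_mx1 f k)).
Qed.

End TensorEval.

Section VectorNorms.
Variable R : realType.
Local Notation C := R[i].
Local Notation cplx := (map_mx (real_complex R)).

Definition sqnormv k (a : 'cV[R]_k) : R := \sum_l a l 0 ^+ 2.

Lemma normvE k (a : 'cV[R]_k) : normv a = Num.sqrt (sqnormv a).
Proof. by []. Qed.

Lemma sqnormv_ge0 k (a : 'cV[R]_k) : 0 <= sqnormv a.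
Proof. by apply: sumr_ge0 => l _; exact: sqr_ge0. Qed.

Lemma normv_ge0 k (a : 'cV[R]_k) : 0 <= normv a.
Proof. exact: sqrtr_ge0. Qed.

Lemma ler_normv k (a b : 'cV[R]_k) : (normv a <= normv b) = (sqnormv a <= sqnormv b).
Proof. by rewrite !normvE ler_sqrt ?sqnormv_ge0. Qed.

Lemma sqnormv_eq0 k (a : 'cV[R]_k) : sqnormv a = 0 -> a = 0.
Proof.
move=> a0; apply/matrixP => i j; rewrite ord1 mxE; apply/eqP; rewrite -sqrf_eq0.
by apply/eqP; apply: (psumr_eq0P _ a0) => // l _; exact: sqr_ge0.
Qed.

Lemma normv0 k : normv (0 : 'cV[R]_k) = 0.
Proof. by rewrite normvE /sqnormv big1 ?sqrtr0 // => l _; rewrite mxE expr0n. Qed.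

Lemma normvD k (a b : 'cV[R]_k) : normv (a + b) <= normv a + normv b.
Proof.
rewrite /normv (eq_bigr (fun l => (a l 0 + b l 0) ^+ 2)) ?minkowski_sum // => l _.
by rewrite mxE.
Qed.

Lemma normvZ k (r : R) (a : 'cV[R]_k) : normv (r *: a) = `|r| * normv a.
Proof.
rewrite !normvE -sqrtr_sqr -sqrtrM ?sqr_ge0 // mulr_sumr.
by congr Num.sqrt; apply: eq_bigr => l _; rewrite mxE exprMn.
Qed.

Lemma sqnormv_col_mx k1 k2 (a : 'cV[R]_k1) (b : 'cV[R]_k2) :
  sqnormv (col_mx a b) = sqnormv a + sqnormv b.
Proof.
by rewrite /sqnormv big_split_ord; congr (_ + _); apply: eq_bigr => l _;
  rewrite ?col_mxEu ?col_mxEd.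
Qed.

Definition realify k (v : 'cV[C]_k) : 'cV[R]_(k + k) :=
  col_mx (map_mx (@complex.Re R) v) (map_mx (@complex.Im R) v).

Lemma normvC_realify k (v : 'cV[C]_k) : normvC v = normv (realify v).
Proof.
rewrite normvE sqnormv_col_mx /sqnormv -big_split.
by congr Num.sqrt; apply: eq_bigr => l _; rewrite !mxE.
Qed.

Lemma realifyD k (v w : 'cV[C]_k) : realify (v + w) = realify v + realify w.
Proof.
by rewrite /realify add_col_mx; congr col_mx; apply/matrixP => i j;
  rewrite !mxE; case: (v i j); case: (w i j).
Qed.

Lemma realify_cplx k (a : 'cV[R]_k) : realify (cplx a) = col_mx a 0.
Proof. by rewrite /realify; congr col_mx; apply/matrixP => i j; rewrite !mxE. Qed.

Local Open Scope complex_scope.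

Lemma Re_sum (I : finType) (F : I -> C) :
  complex.Re (\sum_i F i) = \sum_i complex.Re (F i).
Proof. exact: (raddf_sum (@complex.Re R : Rcomplex R -> R)). Qed.

Lemma Im_sum (I : finType) (F : I -> C) :
  complex.Im (\sum_i F i) = \sum_i complex.Im (F i).
Proof. exact: (raddf_sum (@complex.Im R : Rcomplex R -> R)). Qed.

Lemma realify_cplx_mul k (M : 'M[R]_k) (v : 'cV[C]_k) :
  realify (cplx M *m v) =
  col_mx (M *m map_mx (@complex.Re R) v) (M *m map_mx (@complex.Im R) v).
Proof.
rewrite /realify; congr col_mx; apply/matrixP => i j; rewrite !mxE ?Re_sum ?Im_sum;
  by apply: eq_bigr => l _; rewrite !mxE; case: (v l j) => a b /=; ring.
Qed.

Lemma normvC0 k : normvC (0 : 'cV[C]_k) = 0.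
Proof.
by rewrite /normvC big1 ?sqrtr0 // => l _; rewrite mxE /= expr0n addr0.
Qed.

Lemma normvC_ge0 k (v : 'cV[C]_k) : 0 <= normvC v.
Proof. exact: sqrtr_ge0. Qed.

Lemma normvCD k (v w : 'cV[C]_k) : normvC (v + w) <= normvC v + normvC w.
Proof. by rewrite !normvC_realify realifyD normvD. Qed.

Lemma normvC_sum k (I : finType) (F : I -> 'cV[C]_k) :
  normvC (\sum_i F i) <= \sum_i normvC (F i).
Proof.
elim/big_rec2: _ => [|i y1 y2 _ IH]; first by rewrite normvC0.
by rewrite (le_trans (normvCD _ _)) // lerD2l.
Qed.

Lemma normvC_cplx k (a : 'cV[R]_k) : normvC (cplx a) = normv a.
Proof.
rewrite normvC_realify realify_cplx !normvE sqnormv_col_mx [sqnormv 0]big1 ?addr0 //.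
by move=> l _; rewrite mxE expr0n.
Qed.

Lemma sqr_normvC_col_mx k1 k2 (v : 'cV[C]_k1) (w : 'cV[C]_k2) :
  normvC (col_mx v w) ^+ 2 = normvC v ^+ 2 + normvC w ^+ 2.
Proof.
have sum_ge0 k (u : 'cV[C]_k) :
    0 <= \sum_l (complex.Re (u l 0) ^+ 2 + complex.Im (u l 0) ^+ 2).
  by apply: sumr_ge0 => l _; rewrite addr_ge0 ?sqr_ge0.
rewrite /normvC !sqr_sqrtr // big_split_ord.
by congr (_ + _); apply: eq_bigr => l _; rewrite ?col_mxEu ?col_mxEd.
Qed.

Lemma normc_ge0 (c : C) : 0 <= Normc.normc c.
Proof. by case: c => a b; exact: sqrtr_ge0. Qed.

Lemma normc_real (r : R) : Normc.normc r%:C = `|r|.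
Proof. by rewrite /= expr0n addr0 sqrtr_sqr. Qed.

Lemma normvCZ k (c : C) (v : 'cV[C]_k) : normvC (c *: v) = Normc.normc c * normvC v.
Proof.
case: c => a b; rewrite /normvC /= -sqrtrM ?addr_ge0 ?sqr_ge0 //; congr Num.sqrt.
rewrite mulr_sumr; apply: eq_bigr => l _; rewrite mxE.
by case: (v l 0) => x y /=; ring.
Qed.

Lemma normc_le_normvC k (v : 'cV[C]_k) l : Normc.normc (v l 0) <= normvC v.
Proof.
rewrite /normvC; case E: (v l 0) => [a b] /=.
rewrite ler_sqrt ?sumr_ge0 // => [|j _]; last by rewrite addr_ge0 ?sqr_ge0.
by rewrite (bigD1 l) //= E lerDl sumr_ge0 // => j _; rewrite addr_ge0 ?sqr_ge0.
Qed.

Lemma cplx_contraction k (M : 'M[R]_k) :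
  (forall a, normv (M *m a) <= normv a) ->
  forall v, normvC (cplx M *m v) <= normvC v.
Proof.
move=> hM v; rewrite !normvC_realify realify_cplx_mul /realify !ler_normv.
by rewrite !sqnormv_col_mx lerD // -ler_normv.
Qed.

End VectorNorms.

Section Unitary.
Variable R : realType.
Local Notation C := R[i].
Local Open Scope complex_scope.

Lemma mulmx_adjoint_self k (v : 'cV[C]_k) :
  ((map_mx conjc v)^T *m v) 0 0 = (normvC v ^+ 2)%:C.
Proof.
rewrite normvC_realify normvE sqr_sqrtr ?sqnormv_ge0 // sqnormv_col_mx.
rewrite /sqnormv -big_split [LHS]mxE; apply/eqP; rewrite eq_complex Re_sum Im_sum /=.
apply/andP; split; apply/eqP; last rewrite big1 //.
  by apply: eq_bigr => l _; rewrite !mxE; case: (v l 0) => a b /=; ring.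
by move=> l _; rewrite !mxE; case: (v l 0) => a b /=; ring.
Qed.

Lemma unitary_unitarymx k (U : 'M[C]_k) : unitary U <-> U \is unitarymx.
Proof.
rewrite /unitary; split => [h|/unitarymxP h].
  by apply/unitarymxP; rewrite -map_trmx; exact: mulmx1C.
by rewrite -map_trmx in h; exact: mulmx1C.
Qed.

Lemma big_unitarymx k (I : Type) (r : seq I) (F : I -> 'M[C]_k) :
  (forall i, F i \is unitarymx) -> \big[mulmx/1%:M]_(i <- r) F i \is unitarymx.
Proof.
move=> hF; elim/big_rec: _ => [|i y _ IH]; last exact: mul_unitarymx.
by apply/unitarymxP; rewrite trmx1 map_mx1 mulmx1.
Qed.

Lemma normvC_unitary k (U : 'M[C]_k) (v : 'cV[C]_k) :
  unitary U -> normvC (U *m v) = normvC v.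
Proof.
move=> hU; apply/eqP; rewrite -(@eqrXn2 _ 2) ?normvC_ge0 //; apply/eqP/complexI.
by rewrite -!mulmx_adjoint_self map_mxM trmx_mul mulmxA -(mulmxA _ _ U) hU mulmx1.
Qed.

End Unitary.

Section OperatorNorms.
Variable R : realType.
Local Notation C := R[i].
Local Notation cplx := (map_mx (real_complex R)).

Lemma opnormC_bounded k (M : 'M[C]_k) :
  exists B, forall v, normvC v <= 1 -> normvC (M *m v) <= B.
Proof.
exists (\sum_l normvC (col l M)) => v hv.
have -> : M *m v = \sum_l v l 0 *: col l M.
  apply/matrixP => i j; rewrite ord1 !mxE summxE.
  by apply: eq_bigr => l _; rewrite !mxE mulrC.
rewrite (le_trans (normvC_sum _)) // ler_sum // => l _.
by rewrite normvCZ ler_piMl ?normvC_ge0 // (le_trans (normc_le_normvC _ _)).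
Qed.

Lemma normvC_mul_le_opnormC k (M : 'M[C]_k) v :
  normvC v <= 1 -> normvC (M *m v) <= opnormC M.
Proof.
move=> hv; apply: sup_upper_bound; last by exists v.
split; first by exists (normvC (M *m v)), v.
by have [B hB] := opnormC_bounded M; exists B => _ [w [hw ->]]; exact: hB.
Qed.

Lemma opnormC_le k (M : 'M[C]_k) B :
  (forall v, normvC v <= 1 -> normvC (M *m v) <= B) -> opnormC M <= B.
Proof.
move=> hB; apply: ge_sup => [|_ [w [hw ->]]]; last exact: hB.
by exists (normvC (M *m 0)), 0; rewrite normvC0 ler01.
Qed.

Lemma opnormC_sum_le k (I : finType) (F : I -> 'M[C]_k) :
  opnormC (\sum_i F i) <= \sum_i opnormC (F i).
Proof.
apply: opnormC_le => v hv; rewrite mulmx_suml (le_trans (normvC_sum _)) //.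
by apply: ler_sum => i _; exact: normvC_mul_le_opnormC.
Qed.

Lemma opnormCZ_le k (c : C) (M : 'M[C]_k) :
  opnormC (c *: M) <= Normc.normc c * opnormC M.
Proof.
apply: opnormC_le => v hv; rewrite -scalemxAl normvCZ ler_wpM2l ?normc_ge0 //.
exact: normvC_mul_le_opnormC.
Qed.

Lemma opnormC_block_diag_r k1 k2 (X : 'M[C]_k1) (Y : 'M[C]_k2) :
  opnormC Y <= opnormC (block_mx X 0 0 Y).
Proof.
apply: opnormC_le => y hy.
have normvC_col0 (w : 'cV[C]_k2) : normvC (col_mx (0 : 'cV[C]_k1) w) = normvC w.
  apply/eqP; rewrite -(@eqrXn2 _ 2) ?normvC_ge0 // sqr_normvC_col_mx.
  by rewrite normvC0 expr0n add0r.
have := @normvC_mul_le_opnormC _ (block_mx X 0 0 Y) (col_mx 0 y).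
by rewrite mul_block_col !mulmx0 !mul0mx addr0 add0r !normvC_col0; apply.
Qed.

Lemma opnorm_le_opnormC k (M : 'M[R]_k) : opnorm M <= opnormC (cplx M).
Proof.
apply: ge_sup => [|_ [a [ha ->]]].
  by exists (normv (M *m 0)), 0; rewrite normv0 ler01.
by rewrite -normvC_cplx map_mxM normvC_mul_le_opnormC // normvC_cplx.
Qed.

Lemma normv_mul_le_opnorm k (M : 'M[R]_k) a :
  normv a <= 1 -> normv (M *m a) <= opnorm M.
Proof.
move=> ha; apply: sup_upper_bound; last by exists a.
split; first by exists (normv (M *m a)), a.
exists (opnormC (cplx M)) => _ [b [hb ->]].
by rewrite -normvC_cplx map_mxM normvC_mul_le_opnormC // normvC_cplx.
Qed.

Lemma opnorm_le1_contraction k (M : 'M[R]_k) :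
  opnorm M <= 1 -> forall a, normv (M *m a) <= normv a.
Proof.
move=> hM a; have [a0|a_neq0] := eqVneq (normv a) 0.
  suff -> : a = 0 by rewrite mulmx0.
  by apply: sqnormv_eq0; rewrite -[sqnormv a]sqr_sqrtr ?sqnormv_ge0 // -normvE a0 expr0n.
have na_gt0 : 0 < normv a by rewrite lt_def a_neq0 normv_ge0.
have := @normv_mul_le_opnorm _ M ((normv a)^-1 *: a).
rewrite -scalemxAr !normvZ ger0_norm ?invr_ge0 ?normv_ge0 // mulVf // lexx.
by move=> /(_ isT) /le_trans /(_ hM); rewrite ler_pdivrMl // mulr1.
Qed.

Lemma contraction_trmx k (M : 'M[R]_k) :
  (forall a, normv (M *m a) <= normv a) -> forall a, normv (M^T *m a) <= normv a.
Proof.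
move=> hM a; rewrite ler_normv; set b := M^T *m a.
have dot : sqnormv b = \sum_i a i 0 * (M *m b) i 0.
  transitivity (\sum_l \sum_i b l 0 * (M i l * a i 0)).
    apply: eq_bigr => l _; rewrite expr2 {2}/b mxE mulr_sumr.
    by apply: eq_bigr => i _; rewrite mxE.
  rewrite exchange_big /=; apply: eq_bigr => i _; rewrite mxE mulr_sumr.
  by apply: eq_bigr => l _; rewrite mulrCA mulrA mulrC.
have hMb : sqnormv (M *m b) <= sqnormv b by rewrite -ler_normv.
have cs : sqnormv b ^+ 2 <= sqnormv a * sqnormv b.
  rewrite [in X in X ^+ 2]dot (le_trans (cauchy_schwarz_sum _ _)) //.
  by rewrite ler_wpM2l ?sqnormv_ge0.
have [b0|b_neq0] := eqVneq (sqnormv b) 0; first by rewrite b0 sqnormv_ge0.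
by move: cs; rewrite expr2 ler_pM2r // lt_def b_neq0 sqnormv_ge0.
Qed.

End OperatorNorms.

Lemma mulc_conj_eq1 (R : rcfType) (a c : R) :
  a ^+ 2 + c ^+ 2 = 1 -> (a +i* c)%C * (a +i* c)%C^* = 1.
Proof.
by move=> h; apply/eqP; rewrite eq_complex /= -h; apply/andP; split; apply/eqP; ring.
Qed.

Section HermitianContraction.
Variable R : realType.
Local Notation C := R[i].
Local Open Scope complex_scope.
Local Open Scope sesquilinear_scope.
Variables (k : nat) (H : 'M[C]_k).
Local Notation P := (spectralmx H).
Local Notation eig l := (complex.Re (spectral_diag H 0 l)).

(* [H + i sqrt(1 - H^2)] and [H - i sqrt(1 - H^2)], computed in an eigenbasis of [H]. *)
Definition spectral_unitary (b : bool) : 'M[C]_k :=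
  invmx P *m diag_mx (\row_l (eig l +i* ((if b then 1 else -1) * Num.sqrt (1 - eig l ^+ 2))))
  *m P.

Hypothesis H_herm : H \is hermsymmx.

Lemma hermitian_spectralE : H = invmx P *m diag_mx (spectral_diag H) *m P.
Proof. exact/orthomx_spectralP/hermitian_normalmx. Qed.

Lemma spectral_diag_real l : spectral_diag H 0 l = (eig l)%:C.
Proof. by rewrite RRe_real // (mxOverP (hermitian_spectral_diag_real H_herm)). Qed.

Lemma spectral_eigenvector l :
  H *m col l (invmx P) = spectral_diag H 0 l *: col l (invmx P).
Proof.
have HP : H *m invmx P = invmx P *m diag_mx (spectral_diag H).
  by rewrite {1}hermitian_spectralE -!mulmxA mulmxV ?spectral_unit // mulmx1.
apply/matrixP => i j; rewrite ord1.
move: HP; rewrite mul_mx_diag => /matrixP/(_ i l); rewrite !mxE [RHS]mulrC => <-.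
by apply: eq_bigr => x _; rewrite !mxE.
Qed.

Lemma normvC_spectral_col l : normvC (col l (invmx P)) = 1.
Proof.
have PP : (P *m P^t*) l l = 1.
  by rewrite (unitarymxP (spectral_unitarymx H)) mxE eqxx.
have : (normvC (col l (invmx P)) ^+ 2)%:C = 1.
  rewrite -mulmx_adjoint_self invmx_unitary ?spectral_unitarymx // -PP !mxE.
  by apply: eq_bigr => x _; rewrite !mxE conjcK.
by move/complexI/eqP; rewrite sqrp_eq1 ?normvC_ge0 // => /eqP.
Qed.

Hypothesis H_contr : forall v, normvC (H *m v) <= normvC v.

Lemma eig_sqr_le1 l : eig l ^+ 2 <= 1.
Proof.
have := H_contr (col l (invmx P)).
rewrite spectral_eigenvector normvCZ normvC_spectral_col mulr1 spectral_diag_real.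
by rewrite normc_real -real_normK ?num_real // expr_le1 // normr_ge0.
Qed.

Lemma spectral_unitary_unitarymx b : spectral_unitary b \is unitarymx.
Proof.
rewrite /spectral_unitary invmx_unitary ?spectral_unitarymx //.
rewrite !mul_unitarymx ?trmxC_unitary ?spectral_unitarymx //.
apply/unitarymxP/matrixP => i j; rewrite mul_diag_mx !mxE.
have [<-|ne] := eqVneq i j; last by rewrite !mulr0n conjC0 mulr0.
have sign2 : (if b then 1 else -1 : R) ^+ 2 = 1 by case: b; rewrite ?sqrrN expr1n.
rewrite !mulr1n mulc_conj_eq1 // exprMn sign2 mul1r sqr_sqrtr ?subr_ge0 ?eig_sqr_le1 //.
by rewrite addrC subrK.
Qed.

Lemma hermitian_avg_spectral_unitary :
  H = \sum_b (2^-1)%:C *: spectral_unitary b.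
Proof.
rewrite {1}hermitian_spectralE /spectral_unitary.
under eq_bigr do rewrite scalemxAl scalemxAr.
rewrite -mulmx_suml -mulmx_sumr; congr (_ *m _ *m _).
apply/matrixP => i j; rewrite summxE big_bool !mxE.
case: (i == j) => /=; last by rewrite !mulr0n mulr0 addr0.
rewrite !mulr1n spectral_diag_real; apply/eqP; rewrite eq_complex /=.
by apply/andP; split; apply/eqP; field.
Qed.

End HermitianContraction.

Section Dilation.
Variable R : realType.
Local Notation C := R[i].
Local Notation cplx := (map_mx (real_complex R)).
Local Open Scope complex_scope.
Local Open Scope sesquilinear_scope.
Variables (k : nat) (A : 'M[R]_k).

Definition sym_dilation : 'M[C]_(k + k) := block_mx 0 (cplx A) (cplx A^T) 0.

Definition swap_halves : 'M[C]_(k + k) := block_mx 0 1%:M 1%:M 0.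

Definition dilation_unitary (b : bool) : 'M[C]_(k + k) :=
  swap_halves *m spectral_unitary sym_dilation b.

Lemma sym_dilation_herm : sym_dilation \is hermsymmx.
Proof.
apply/is_hermitianmxP; rewrite expr0 scale1r.
rewrite /sym_dilation tr_block_mx map_block_mx !trmx0 !map_mx0 -!map_trmx trmxK.
have cplxJ : (cplx A) ^ Num.conj_op = cplx A.
  by apply/matrixP => i j; rewrite !mxE conj_Creal // complex_real.
by rewrite cplxJ.
Qed.

Lemma swap_halves_unitarymx : swap_halves \is unitarymx.
Proof.
apply/unitarymxP; rewrite /swap_halves tr_block_mx !trmx0 trmx1 map_block_mx map_mx0 map_mx1.
rewrite mulmx_block !mul0mx !mulmx0 !mul1mx !addr0 !add0r.
by rewrite [RHS](scalar_mx_block k k).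
Qed.

Lemma block_diag_avg_dilation_unitary :
  block_mx (cplx A^T) 0 0 (cplx A) = \sum_b (2^-1)%:C *: dilation_unitary b.
Proof.
have -> : block_mx (cplx A^T) 0 0 (cplx A) = swap_halves *m sym_dilation.
  by rewrite mulmx_block !mul0mx !mul1mx !addr0 !add0r.
rewrite {1}(hermitian_avg_spectral_unitary sym_dilation_herm) mulmx_sumr.
by rewrite /dilation_unitary; under [RHS]eq_bigr do rewrite scalemxAr.
Qed.

Hypothesis A_contr : forall a, normv (A *m a) <= normv a.

Lemma sym_dilation_contraction v : normvC (sym_dilation *m v) <= normvC v.
Proof.
rewrite -(vsubmxK v) /sym_dilation mul_block_col !mul0mx add0r addr0.
rewrite -(ler_pXn2r (_ : 0 < 2)%N) ?nnegrE ?normvC_ge0 // !sqr_normvC_col_mx addrC.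
rewrite lerD // ler_pXn2r ?nnegrE ?normvC_ge0 // cplx_contraction //.
exact: contraction_trmx.
Qed.

Lemma dilation_unitary_unitarymx b : dilation_unitary b \is unitarymx.
Proof.
rewrite mul_unitarymx ?swap_halves_unitarymx //.
exact: (spectral_unitary_unitarymx sym_dilation_herm sym_dilation_contraction).
Qed.

End Dilation.

Section CbNorm.
Variables (R : realType) (n t : nat).
Local Notation C := R[i].
Local Notation cplx := (map_mx (real_complex R)).
Local Open Scope complex_scope.
Implicit Types T : tensor R n t.

Lemma opnormC_tensor_eval_le k T (U : 'I_t -> 'I_n -> 'M[C]_k) :
  (forall j l, unitary (U j l)) ->
  opnormC (tensor_eval (fun idx => (T idx)%:C) U) <= \sum_idx `|T idx|.
Proof.
move=> hU; apply: opnormC_le => v hv.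
rewrite mulmx_suml (le_trans (normvC_sum _)) // ler_sum // => idx _.
rewrite -scalemxAl normvCZ normc_real normvC_unitary ?ler_piMr //.
by apply/unitary_unitarymx/big_unitarymx => j; exact/unitary_unitarymx.
Qed.

Lemma opnormC_le_cbnormT k T (U : 'I_t -> 'I_n -> 'M[C]_k) :
  (0 < k)%N -> (forall j l, unitary (U j l)) ->
  opnormC (tensor_eval (fun idx => (T idx)%:C) U) <= cbnormT T.
Proof.
move=> k_gt0 hU; apply: sup_upper_bound; last by exists k, U.
split; first by exists (opnormC (tensor_eval (fun idx => (T idx)%:C) U)), k, U.
by exists (\sum_idx `|T idx|) => _ [k' [U' [_ [hU' ->]]]]; exact: opnormC_tensor_eval_le.
Qed.

(* Expanding the products turns the matrix into the mean of [2^t] matrices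
   of the kind measured by [cbnormT]. *)
Lemma opnormC_tensor_eval_avg_le_cbnormT k T (D : 'I_n -> 'M[C]_k)
    (V : 'I_n -> bool -> 'M[C]_k) :
  (0 < k)%N -> (forall l b, V l b \is unitarymx) ->
  (forall l, D l = \sum_b (2^-1)%:C *: V l b) ->
  opnormC (tensor_eval (fun idx => (T idx)%:C) (fun _ => D)) <= cbnormT T.
Proof.
move=> k_gt0 hV hD.
have -> : tensor_eval (fun idx => (T idx)%:C) (fun _ => D) =
    ((2^-1) ^+ t)%:C *: \sum_(e : {ffun 'I_t -> bool})
      tensor_eval (fun idx => (T idx)%:C) (fun j l => V l (e j)).
  rewrite /tensor_eval exchange_big scaler_sumr; apply: eq_bigr => idx _ /=.
  under eq_bigr do rewrite hD.
  by rewrite big_mulmx_sum_scale -rmorphXn scalerA mulrC -scalerA scaler_sumr.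
apply: le_trans (opnormCZ_le _ _) _; rewrite normc_real.
apply: le_trans (ler_wpM2l (normr_ge0 _) (opnormC_sum_le _)) _.
have each (e : {ffun 'I_t -> bool}) :
    opnormC (tensor_eval (fun idx => (T idx)%:C) (fun j l => V l (e j))) <= cbnormT T.
  by apply: opnormC_le_cbnormT => // j l; exact/unitary_unitarymx.
apply: le_trans (ler_wpM2l (normr_ge0 _) (ler_sum _ (fun e _ => each e))) _.
rewrite ger0_norm ?exprn_ge0 ?invr_ge0 ?ler0n // sumr_const card_ffun card_bool card_ord.
by rewrite -[cbnormT T *+ _]mulr_natl natrX mulrA -exprMn mulVf ?pnatr_eq0 // expr1n mul1r.
Qed.

Lemma opnormC_cplx_tensor_eval_le_cbnormT m T (A : 'I_n -> 'M[R]_m) :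
  (0 < m)%N -> (forall l, opnorm (A l) <= 1) ->
  opnormC (cplx (tensor_eval T (fun _ => A))) <= cbnormT T.
Proof.
move=> m_gt0 hA; rewrite map_tensor_eval.
apply: le_trans (opnormC_block_diag_r
  (tensor_eval (fun idx => (T idx)%:C) (fun _ l => cplx (A l)^T)) _) _.
rewrite -tensor_eval_block_diag.
apply: (opnormC_tensor_eval_avg_le_cbnormT T (V := fun l => dilation_unitary (A l))).
- by rewrite addn_gt0 m_gt0.
- by move=> l b; apply/dilation_unitary_unitarymx/opnorm_le1_contraction.
- by move=> l; exact: block_diag_avg_dilation_unitary.
Qed.

End CbNorm.

Lemma tensor_eval_tcomp_sum (R : realType) m n t (T : tensor R n t)
    (S : {perm 'I_t} -> tensor R n t) (A : 'I_n -> 'M[R]_m) :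
  (forall l l', A l *m A l' = A l' *m A l) ->
  (forall idx, T idx = \sum_s tcomp (S s) s idx) ->
  tensor_eval T (fun _ => A) = \sum_s tensor_eval (S s) (fun _ => A).
Proof.
move=> hcomm hS; rewrite (eq_tensor_eval _ hS) tensor_eval_sum.
by apply: eq_bigr => s _; exact: tensor_eval_perm.
Qed.

Theorem proposition4p4 (R : realType) (m n t : nat)
  (hm : (0 < m)%N) (hn : (0 < n)%N) (ht : (0 < t)%N)
  (p : {mpoly R[n]}) (hp : p \is t.-homog)
  (A : 'I_n -> 'M[R]_m)
  (hA : forall l, opnorm (A l) <= 1)
  (hcomm : forall l l', A l *m A l' = A l' *m A l) :
  opnorm (\sum_(idx : {ffun 'I_t -> 'I_n})
            Tp t p idx *: \big[mulmx/1%:M]_(j < t) A (idx j))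
  <= cbnorm t p.
Proof.
apply: lb_le_inf.
  pose S0 (s : {perm 'I_t}) := if s == 1%g then Tp t p else fun _ => 0.
  exists (\sum_s cbnormT (S0 s)), S0; split => // idx.
  rewrite (bigD1 1%g) //= big1 ?addr0 => [|s /negbTE s1]; last by rewrite /tcomp /S0 s1.
  by rewrite /tcomp /S0 eqxx; congr Tp; apply/ffunP => j; rewrite ffunE perm1.
move=> _ [S [hS ->]].
apply: le_trans (opnorm_le_opnormC _) _.
rewrite -/(tensor_eval (Tp t p) (fun _ => A)) (tensor_eval_tcomp_sum hcomm hS).
rewrite (big_morph _ (map_mxD _ (m := m) (n := m)) (map_mx0 _ m m)).
apply: le_trans (opnormC_sum_le _) _; apply: ler_sum => s _.
exact: opnormC_cplx_tensor_eval_le_cbnormT.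
Qed.
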